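(* Consider a $2^k$ full factorial design under the generalized linear model described in the context, i.e., $m=p=2^k$ and the model matrix is \[ \mathbf{X}=\begin{bmatrix}1&-1\\1&1\end{bmatrix}\otimes\cdots\otimes\begin{bmatrix}1&-1\\1&1\end{bmatrix}\quad(k\text{ factors, Kronecker product}), \] and suppose $\nu_i>0$ for all $i$. Then an allocation $\mathbf{w}_*=(w_1^*,\ldots,w_m^* )^T\in S_m$ is A-optimal if and only if $w_i^*\propto\nu_i^{-1/2}$, $i=1,\ldots,m$. Furthermore, the uniform allocation $w_i^*=2^{-k}$ for all $i$ is A-optimal if and only if $\nu_1=\cdots=\nu_m$.
   Context: Generalized linear model (GLM): independent responses $Y_i$ from a one-parameter exponential family with $E(Y_i)=\mu_i$ and $\eta_i=g(\mu_i)=\mathbf{X}_i^T\boldsymbol\beta$, where $g$ is the link function, $\mathbf{X}_i=\mathbf{q}(\mathbf{x}_i)=(q_1(\mathbf{x}_i),\ldots,q_p(\mathbf{x}_i))^T$, and $\boldsymbol\beta\in\mathbb{R}^p$ is a fixed (assumed) parameter vector. Let $\nu_i=(\partial\mu_i/\partial\eta_i)^2/\mathrm{Var}(Y_i)\ge0$. The model matrix is $\mathbf{X}=(\mathbf{q}(\mathbf{x}_1),\ldots,\mathbf{q}(\mathbf{x}_m))^T$. Let $S_m=\{\mathbf{w}\in\mathbb{R}^m: w_i\ge 0,\sum_i w_i=1\}$, $\mathbf{W}=\mathrm{diag}\{w_1\nu_1,\ldots,w_m\nu_m\}$, $f(\mathbf{w})=|\mathbf{X}^T\mathbf{W}\mathbf{X}|$,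 and $h(\mathbf{w})=[\mathrm{tr}((\mathbf{X}^T\mathbf{W}\mathbf{X})^{-1})]^{-1}$ if $f(\mathbf{w})>0$, $h(\mathbf{w})=0$ otherwise. An allocation is A-optimal if it maximizes $h$ over $S_m$. *)

(* R : rcfType (real closed field, needed for Num.sqrt). *)
From HB Require Import structures.
From mathcomp Require Import all_boot all_order all_algebra.
From mathcomp Require Export mxtens.
Set Implicit Arguments. Unset Strict Implicit. Unset Printing Implicit Defensive.
Import Order.TTheory GRing.Theory Num.Theory.
Local Open Scope ring_scope.

Definition H2 {R : rcfType} : 'M[R]_2 :=
  \matrix_(i < 2, j < 2) (if (i == 0%N :> nat) && (j == 1%N :> nat) then -1 else 1).

Definition design_X {R : rcfType} (k : nat) : 'M[R]_(2 ^ k, 2 ^ k) := H2 ^t k.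

Definition in_simplex {R : rcfType} {m : nat} (w : 'I_m -> R) : Prop :=
  (forall i, 0 <= w i) /\ \sum_(i < m) w i = 1.

Definition info_mx {R : rcfType} {m p : nat} (X : 'M[R]_(m, p))
  (nu w : 'I_m -> R) : 'M[R]_p :=
  X^T *m diag_mx (\row_i (w i * nu i)) *m X.

Definition f_det {R : rcfType} {m p : nat} (X : 'M[R]_(m, p)) (nu w : 'I_m -> R) : R :=
  \det (info_mx X nu w).

Definition h_A {R : rcfType} {m p : nat} (X : 'M[R]_(m, p)) (nu w : 'I_m -> R) : R :=
  if 0 < f_det X nu w then (\tr (invmx (info_mx X nu w)))^-1 else 0.

Definition A_optimal {R : rcfType} {m p : nat} (X : 'M[R]_(m, p)) (nu w : 'I_m -> R) : Prop :=
  in_simplex w /\ forall v : 'I_m -> R, in_simplex v -> h_A X nu v <= h_A X nu w.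

(* Since X^T X = 2^k I, whenever all weights are positive the information matrix
   X^T W X has inverse 2^-2k X^T W^-1 X, so h(w) = 2^k / \sum_i 1 / (w_i nu_i);
   otherwise det (X^T W X) = 0 and h(w) = 0.  Writing a_i = nu_i^(-1/2), on the
   simplex  \sum_i a_i^2 / w_i - (\sum_i a_i)^2 = \sum_i (a_i - (\sum_j a_j) w_i)^2 / w_i,
   a Cauchy-Schwarz inequality together with its defect, so h is maximal exactly
   at w_i = a_i / \sum_j a_j. *)

From HB Require Import structures.
From mathcomp Require Import all_boot all_order all_algebra ring.
Set Implicit Arguments. Unset Strict Implicit. Unset Printing Implicit Defensive.
Import Order.TTheory GRing.Theory Num.Theory.
Local Open Scope ring_scope.

Lemma tensmx_scalar (R : comPzRingType) m n (a b : R) :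
  (a%:M : 'M_m) *t (b%:M : 'M_n) = (a * b)%:M.
Proof.
apply/matrixP=> i j.
case: (mxtens_indexP i)=> i0 i1; case: (mxtens_indexP j)=> j0 j1.
rewrite tensmxE !mxE (inj_eq (can_inj (@mxtens_indexK m n))) xpair_eqE.
by case: (i0 == j0); case: (i1 == j1); rewrite /= ?mulr1n ?mulr0n ?mulr0 ?mul0r.
Qed.

Lemma trmx_mul_ntensmx (R : comPzRingType) m (A : 'M[R]_m) (c : R) k :
  A^T *m A = c%:M -> (A ^t k)^T *m A ^t k = (c ^+ k)%:M.
Proof.
move=> AtA; case: k => [|k]; first by rewrite ntensmx0 trmx1 mulmx1.
elim: k => [|k IHk]; first by rewrite ntensmx1 expr1.
by rewrite ntensmxSS trmx_tens tensmx_mul AtA IHk tensmx_scalar -exprS.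
Qed.

Lemma trmx_mul_H2 (R : rcfType) : (H2 : 'M[R]_2)^T *m H2 = 2%:M.
Proof.
apply/matrixP=> i j; rewrite !mxE big_ord_recr big_ord1 /= !mxE.
case: i => [[|[|i]] hi] //; case: j => [[|[|j]] hj] //=.
all: by rewrite ?mulr1n ?mulr0n; ring.
Qed.

Lemma trmx_mul_design_X (R : rcfType) k :
  (design_X k : 'M[R]_(2 ^ k))^T *m design_X k = (2 ^ k)%:R%:M.
Proof. by rewrite natrX; apply/trmx_mul_ntensmx/trmx_mul_H2. Qed.

Lemma sum_sqr_div_sub_sqr_sum (R : fieldType) n (a w : 'I_n -> R) :
  (forall i, w i != 0) -> \sum_i w i = 1 ->
  \sum_i a i ^+ 2 / w i - (\sum_i a i) ^+ 2 =
  \sum_i (a i - (\sum_j a j) * w i) ^+ 2 / w i.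
Proof.
move=> w_neq0 w_sum1; set S := \sum_j a j.
rewrite [RHS](eq_bigr (fun i => a i ^+ 2 / w i - 2 * S * a i + S ^+ 2 * w i)).
  by rewrite big_split sumrB /= -!mulr_sumr w_sum1 -/S; ring.
by move=> i _; field; exact: w_neq0.
Qed.

Section CauchySchwarzSimplex.

Variables (R : realFieldType) (n : nat) (a w : 'I_n -> R).
Hypotheses (w_gt0 : forall i, 0 < w i) (w_sum1 : \sum_i w i = 1).

Let w_neq0 i : w i != 0. Proof. by rewrite gt_eqF. Qed.

Let sqr_dev_ge0 i : true -> 0 <= (a i - (\sum_j a j) * w i) ^+ 2 / w i.
Proof. by rewrite divr_ge0 ?sqr_ge0 ?ltW. Qed.

Lemma sqr_sum_le_sum_sqr_div : (\sum_i a i) ^+ 2 <= \sum_i a i ^+ 2 / w i.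
Proof. by rewrite -subr_ge0 sum_sqr_div_sub_sqr_sum // sumr_ge0. Qed.

Lemma sqr_sum_eq_sum_sqr_div : \sum_i a i ^+ 2 / w i = (\sum_i a i) ^+ 2 ->
  forall i, a i = (\sum_j a j) * w i.
Proof.
move=> /eqP; rewrite -subr_eq0 sum_sqr_div_sub_sqr_sum // => /eqP dev0 i.
move/eqP: (@psumr_eq0P _ _ _ _ sqr_dev_ge0 dev0 i isT).
by rewrite mulf_eq0 invr_eq0 (negPf (w_neq0 i)) orbF sqrf_eq0 subr_eq0 => /eqP.
Qed.

End CauchySchwarzSimplex.

Lemma in_simplex_proportional (R : rcfType) n (a w : 'I_n -> R) : in_simplex w ->
  (exists c, forall i, w i = c * a i) <-> forall i, w i = (\sum_j a j)^-1 * a i.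
Proof.
move=> [_ w_sum1]; split=> [[c w_ca] | w_Sa]; last by exists (\sum_j a j)^-1.
set S := \sum_j a j.
have cS1 : c * S = 1.
  by rewrite -w_sum1 mulr_sumr; apply: eq_bigr => i _; rewrite w_ca.
have S_neq0 : S != 0.
  by apply/eqP => S0; move: cS1; rewrite S0 mulr0 => /esym/eqP; rewrite oner_eq0.
by move=> i; rewrite w_ca -[c]mulr1 -(mulfV S_neq0) mulrA cS1 mul1r.
Qed.

Lemma in_simplex_uniform (R : rcfType) n :
  (0 < n)%N -> in_simplex (fun _ : 'I_n => (n%:R : R)^-1).
Proof.
move=> n_gt0; split=> [i|]; first by rewrite invr_ge0 ler0n.
by rewrite sumr_const card_ord -[_ *+ n]mulr_natr mulVf // pnatr_eq0 -lt0n.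
Qed.

Lemma const_proportional_sqrt_inv (R : rcfType) n (nu : 'I_n -> R) (u : R)
    (i0 : 'I_n) : (forall i, 0 < nu i) -> u != 0 ->
  (exists c, forall i, u = c * (Num.sqrt (nu i))^-1) <-> forall i j, nu i = nu j.
Proof.
move=> nu_gt0 u_neq0; split=> [[c u_ca] i j | nu_const].
  have c_neq0 : c != 0 by apply: contraNneq u_neq0 => c0; rewrite (u_ca i0) c0 mul0r.
  have /invr_inj sqrt_eq : (Num.sqrt (nu i))^-1 = (Num.sqrt (nu j))^-1.
    by apply: (mulfI c_neq0); rewrite -!u_ca.
  by rewrite -(sqr_sqrtr (ltW (nu_gt0 i))) sqrt_eq sqr_sqrtr ?ltW.
exists (u * Num.sqrt (nu i0)) => i.
by rewrite (nu_const i i0) mulfK // gt_eqF // sqrtr_gt0.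
Qed.

Section ScaledOrthogonalDesign.

Variables (R : rcfType) (n : nat) (X : 'M[R]_n) (c : R) (nu : 'I_n -> R).
Hypotheses (c_gt0 : 0 < c) (trmx_mulX : X^T *m X = c%:M).
Hypothesis nu_gt0 : forall i, 0 < nu i.

Let c_neq0 : c != 0. Proof. by rewrite gt_eqF. Qed.

Lemma mulmx_trX : X *m X^T = c%:M.
Proof.
have /mulmx1C : (c^-1 *: X^T) *m X = 1%:M.
  by rewrite -scalemxAl trmx_mulX scale_scalar_mx mulVf.
rewrite -scalemxAr => XXtV.
by rewrite -[LHS]scale1r -(mulfV c_neq0) -scalerA XXtV scale_scalar_mx mulr1.
Qed.

Lemma det_info_mx w : \det (info_mx X nu w) = c ^+ n * \prod_i (w i * nu i).
Proof.
have detX2 : \det X ^+ 2 = c ^+ n.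
  by rewrite -(det_scalar n c) -trmx_mulX det_mulmx det_tr.
rewrite /info_mx !det_mulmx det_tr det_diag -detX2.
under eq_bigr do rewrite mxE.
ring.
Qed.

Lemma invmx_info_mx w : (forall i, w i * nu i != 0) ->
  invmx (info_mx X nu w) = c^-2 *: (X^T *m diag_mx (\row_i (w i * nu i)^-1) *m X).
Proof.
move=> d_neq0; set M := info_mx X nu w; set N := _ *: _.
have DDV : diag_mx (\row_i (w i * nu i)) *m diag_mx (\row_i (w i * nu i)^-1) = 1%:M.
  rewrite mulmx_diag -diag_const_mx; congr diag_mx; apply/rowP => j.
  by rewrite !mxE mulfV.
have MN : M *m N = 1%:M.
  rewrite /M /info_mx -scalemxAr !mulmxA -(mulmxA _ X) mulmx_trX mul_mx_scalar.
  rewrite -!scalemxAl -(mulmxA X^T) DDV mulmx1 trmx_mulX scalerA scale_scalar_mx.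
  by congr (_%:M); field.
have [M_unit _] := mulmx1_unit MN.
by rewrite -[invmx M]mulmx1 -MN mulmxA mulVmx // mul1mx.
Qed.

Lemma mxtrace_invmx_info_mx w : (forall i, w i * nu i != 0) ->
  \tr (invmx (info_mx X nu w)) = c^-1 * \sum_i (w i * nu i)^-1.
Proof.
move=> d_neq0; rewrite invmx_info_mx // mxtraceZ -mulmxA mxtrace_mulC -mulmxA.
rewrite mulmx_trX mul_mx_scalar mxtraceZ mxtrace_diag.
under eq_bigr do rewrite mxE.
by rewrite mulrA; congr (_ * _); field.
Qed.

Lemma h_A_scaled_orthogonal w : (forall i, 0 <= w i) ->
  h_A X nu w = if [forall i, 0 < w i] then c / \sum_i (w i * nu i)^-1 else 0.
Proof.
move=> w_ge0; rewrite /h_A /f_det det_info_mx.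
case: (boolP [forall i, 0 < w i]) => [/forallP w_gt0 | /forallPn [i w_i_le0]].
  have d_gt0 i : 0 < w i * nu i by rewrite mulr_gt0.
  rewrite ifT ?mulr_gt0 ?exprn_gt0 ?prodr_gt0 // mxtrace_invmx_info_mx => [|i].
    by rewrite invfM invrK mulrC.
  by rewrite gt_eqF.
have w_i0 : w i = 0 by apply/eqP; rewrite eq_le w_ge0 andbT leNgt.
by rewrite (bigD1 i) //= w_i0 !mul0r mulr0 ltxx.
Qed.

Hypothesis n_gt0 : (0 < n)%N.

Local Notation a i := (Num.sqrt (nu i))^-1.
Local Notation S := (\sum_i a i).

Let a_gt0 i : 0 < a i. Proof. by rewrite invr_gt0 sqrtr_gt0. Qed.

Let S_gt0 : 0 < S.
Proof.
rewrite (bigD1 (Ordinal n_gt0)) //=; apply: ltr_pwDl => //.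
by apply: sumr_ge0 => i _; exact: ltW.
Qed.

Let inv_mul_nu w i : (w i * nu i)^-1 = a i ^+ 2 / w i.
Proof. by rewrite exprVn sqr_sqrtr ?ltW // invfM mulrC. Qed.

Lemma h_A_le v : in_simplex v -> h_A X nu v <= c / S ^+ 2.
Proof.
move=> [v_ge0 v_sum1]; rewrite (h_A_scaled_orthogonal v_ge0).
case: ifP => [/forallP v_gt0 | _]; last by rewrite divr_ge0 ?sqr_ge0 ?ltW.
under eq_bigr do rewrite inv_mul_nu.
have CS := sqr_sum_le_sum_sqr_div (fun i => a i) v_gt0 v_sum1.
have S2_gt0 : 0 < S ^+ 2 by rewrite exprn_gt0.
by rewrite ler_pM2l // lef_pV2 ?posrE // (lt_le_trans S2_gt0 CS).
Qed.

Lemma h_A_opt w : (forall i, w i = S^-1 * a i) -> h_A X nu w = c / S ^+ 2.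
Proof.
move=> w_opt; have w_gt0 i : 0 < w i by rewrite w_opt mulr_gt0 ?invr_gt0 ?sqrtr_gt0.
rewrite (h_A_scaled_orthogonal (fun i => ltW (w_gt0 i))).
rewrite ifT; last exact/forallP.
congr (c / _); rewrite expr2 mulr_suml; apply: eq_bigr => i _.
rewrite inv_mul_nu w_opt.
by field; rewrite !gt_eqF ?sqrtr_gt0.
Qed.

Lemma h_A_eq_opt v : in_simplex v -> h_A X nu v = c / S ^+ 2 ->
  forall i, v i = S^-1 * a i.
Proof.
move=> [v_ge0 v_sum1]; rewrite (h_A_scaled_orthogonal v_ge0).
case: ifP => [/forallP v_gt0 | _]; last first.
  by move=> /esym/eqP; rewrite mulf_eq0 invr_eq0 !gt_eqF ?exprn_gt0.
under eq_bigr do rewrite inv_mul_nu.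
move=> /(mulfI (lt0r_neq0 c_gt0))/invr_inj CS_eq i.
by rewrite (sqr_sum_eq_sum_sqr_div v_gt0 v_sum1 CS_eq i) mulKf ?gt_eqF.
Qed.

Lemma A_optimalE w : in_simplex w ->
  A_optimal X nu w <-> forall i, w i = S^-1 * a i.
Proof.
move=> w_simplex; have opt_simplex : in_simplex (fun i => S^-1 * a i).
  split=> [i|]; first by rewrite mulr_ge0 ?invr_ge0 ?sqrtr_ge0 ?ltW.
  by rewrite -mulr_sumr mulVf ?gt_eqF.
split=> [[_ w_max] | w_opt].
  apply: h_A_eq_opt => //; apply/le_anti; rewrite h_A_le //=.
  by rewrite -(h_A_opt (w := fun i => S^-1 * a i)) // w_max.
by split=> // v /h_A_le; rewrite (h_A_opt w_opt).
Qed.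

End ScaledOrthogonalDesign.

Theorem corollary1 (R : rcfType) (k : nat) (nu : 'I_(2 ^ k) -> R)
  (hnu : forall i, 0 < nu i) :
  (forall w : 'I_(2 ^ k) -> R, in_simplex w ->
     (A_optimal (design_X k) nu w <->
      exists c : R, forall i, w i = c * (Num.sqrt (nu i))^-1))
  /\
  (A_optimal (design_X k) nu (fun _ => ((2 ^ k)%:R)^-1) <->
   (forall i j, nu i = nu j)).
Proof.
have n_gt0 : (0 < 2 ^ k)%N by rewrite expn_gt0.
have c_gt0 : 0 < (2 ^ k)%:R :> R by rewrite ltr0n.
have optE := A_optimalE c_gt0 (trmx_mul_design_X R k) hnu n_gt0.
have opt_proportionalE w : in_simplex w -> A_optimal (design_X k) nu w <->
    exists c : R, forall i, w i = c * (Num.sqrt (nu i))^-1.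
  by move=> w_simplex; rewrite optE // in_simplex_proportional.
split=> //; rewrite opt_proportionalE; last exact: in_simplex_uniform.
by apply: (const_proportional_sqrt_inv (Ordinal n_gt0)); rewrite // invr_neq0 ?gt_eqF.
Qed.
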